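(* Let $X$ be a real normed space, $f:X\to\mathbb R\cup\{+\infty\}$ proper, $\bar x\in(\partial f)^{-1}(0)$, and $p,q\in(1,\infty)$ with $p^{-1}+q^{-1}=1$. Suppose $(\partial f)^{-1}:X^*\rightrightarrows X$ is lower hemicontinuous at $0$. Then the following are equivalent: (i) there exist $\delta\in(0,+\infty]$ and $\gamma\in(0,+\infty)$ such that $f(x)\ge f(\bar x)+\gamma\|x-\bar x\|^p$ for all $x\in\mathbb B(\bar x,\delta)$; (ii) $\partial f:X\rightrightarrows X^*$ is strongly $\frac qp$-subregular at $\bar x$ (for some parameters $\alpha\in(0,+\infty]$, $\kappa\in(0,+\infty)$).
   Context: $\partial f(x):=\{\xi\in X^*: x\text{ is a global minimizer of } f-\langle\xi,\cdot\rangle\}$; $(\partial f)^{-1}(\xi)=\{x:\xi\in\partial f(x)\}$. $\mathbb B(x,+\infty)=X$. A set-valued map $\mathcal F:X\rightrightarrows Y$ is lower hemicontinuous at $\bar y$ if for every open $V$ with $\mathcal F(\bar y)\cap V\ne\emptyset$ there is a neighborhood $U$ of $\bar y$ with $\mathcal F(y)\cap V\neq\emptyset$ for all $y\in U$. $\mathcal F$ is strongly $\lambda$-subregular at $\bar x\in\mathcal F^{-1}(0)$ with parameters $\alpha\in(0,+\infty]$, $\kappa\in(0,+\infty)$ if $\|x-\bar x\|\le\kappa\, d(0,\mathcal F(x))^\lambda$ for all $x\in\mathbb B(\bar x,\alpha)$, where $d(0,\mathcal F(x))=\inf\{\|y\|:y\in\mathcal F(x)\}$. *)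

From HB Require Import structures.
From mathcomp Require Import all_boot all_order all_algebra.
From mathcomp Require Import all_classical all_reals all_analysis.
Set Implicit Arguments. Unset Strict Implicit. Unset Printing Implicit Defensive.
Import Order.TTheory GRing.Theory Num.Theory.
Import numFieldNormedType.Exports.
Local Open Scope classical_set_scope.
Local Open Scope ring_scope.

Section Defs.
Context {R : realType} {X : normedModType R}.

Definition is_dual (xi : X -> R) : Prop :=
  linear xi /\ continuous xi.

Definition dnorm (xi : X -> R) : R :=
  sup [set `|xi x| | x in [set x : X | `|x| <= 1]].

Definition subdiff (f : X -> \bar R) (x : X) : set (X -> R) :=
  [set xi | is_dual xi /\
     forall y : X, (f x - (xi x)%:E <= f y - (xi y)%:E)%E].

Definition subdiff_inv (f : X -> \bar R) (xi : X -> R) : set X :=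
  [set x | subdiff f x xi].

Definition proper_fun (f : X -> \bar R) : Prop :=
  (forall x, (f x != -oo)%E) /\ (exists x, (f x != +oo)%E).

Definition lhc_at0 (G : (X -> R) -> set X) : Prop :=
  forall V : set X, open V -> G (fun _ => 0) `&` V !=set0 ->
    exists2 eps : R, 0 < eps &
      forall xi, is_dual xi -> dnorm xi < eps -> G xi `&` V !=set0.

Definition eball (xbar : X) (delta : \bar R) : set X :=
  [set x | ((`|x - xbar|)%:E <= delta)%E].

(* d(0, F x) = inf { ||y||_* : y ∈ F x } (= +oo if F x is empty) *)
Definition dist0 (F : X -> set (X -> R)) (x : X) : \bar R :=
  ereal_inf [set (dnorm xi)%:E | xi in F x].

Definition strongly_subregular (F : X -> set (X -> R)) (lam : R) (xbar : X)
    (alpha : \bar R) (kappa : R) : Prop :=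
  F xbar (fun _ => 0) /\ (0 < alpha)%E /\ 0 < kappa /\
  forall x, eball xbar alpha x ->
    ((`|x - xbar|)%:E <= kappa%:E * poweR (dist0 F x) lam)%E.

End Defs.

From HB Require Import structures.
From mathcomp Require Import all_boot all_order all_algebra.
From mathcomp Require Import all_classical all_reals all_analysis.
From mathcomp Require Import ring lra.
Import Order.TTheory GRing.Theory Num.Theory.
Import numFieldNormedType.Exports.
Local Open Scope classical_set_scope.
Local Open Scope ring_scope.

(* (i) => (ii): for [xi] in [∂f(x)], the subgradient inequality at [xbar]
   combined with the growth bound gives
   [gamma |x - xbar|^p <= xi (x - xbar) <= |xi|_* |x - xbar|], that is
   [|x - xbar| <= (|xi|_* / gamma)^(1/(p-1))], and [1/(p-1) = q/p].
   (ii) => (i): lower hemicontinuity provides, for every small [xi], a point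
   [x_xi] near [xbar] with [xi] in [∂f(x_xi)], and subregularity puts it within
   [kappa |xi|_*^(q/p)] of [xbar].  The subgradient inequality at [x_xi] gives
   [f y >= f xbar + xi (y - xbar) - kappa |xi|_*^(1 + q/p)]; a Hahn-Banach
   functional norming [y - xbar] with [|xi|_* = (|y - xbar| / 2 kappa)^(p-1)]
   turns this tilted minorant into growth of order [p]. *)

Section dual_space.
Context {R : realType} {X : normedModType R}.
Implicit Types (xi : X -> R) (x y : X).

Lemma dual_sub [xi] x y : is_dual xi -> xi (x - y) = xi x - xi y.
Proof.
case=> lin _; have := lin (-1) y x.
by rewrite !scaleN1r [- y + x]addrC [- xi y + xi x]addrC.
Qed.

Lemma dual0 [xi] : is_dual xi -> xi 0 = 0.
Proof. by move=> dxi; rewrite -(subrr 0) dual_sub // subrr. Qed.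

Lemma dual_unit_ball_ubound [xi] : is_dual xi ->
  has_ubound [set `|xi x| | x in [set x : X | `|x| <= 1]].
Proof.
case=> lin cont.
pose g : {linear X -> R} := HB.pack xi (GRing.isLinear.Build _ _ _ _ xi lin).
have /linear_boundedP [M [Mr HM]] : bounded_near g (nbhs 0).
  exact/linear_bounded_continuous.
have hM : M < `|M| + 1 by rewrite (le_lt_trans (real_ler_norm Mr)) // ltrDl.
exists (`|M| + 1) => _ [x x1 <-].
by apply: le_trans (HM _ hM x) _; rewrite ler_piMr // addr_ge0.
Qed.

Lemma dnorm_ge0 [xi] : is_dual xi -> 0 <= dnorm xi.
Proof.
move=> dxi; apply: le_trans (normr_ge0 (xi 0)) _.
rewrite /dnorm; apply: ub_le_sup; first exact: dual_unit_ball_ubound.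
by exists 0; rewrite /= ?normr0.
Qed.

Lemma dual_le_dnorm [xi] y : is_dual xi -> `|xi y| <= dnorm xi * `|y|.
Proof.
move=> dxi; have [->|y0] := eqVneq y 0.
  by rewrite dual0 // !normr0 mulr0.
have ny0 : 0 < `|y| by rewrite normr_gt0.
have : `|xi (`|y|^-1 *: y)| <= dnorm xi.
  rewrite /dnorm; apply: ub_le_sup; first exact: dual_unit_ball_ubound.
  by exists (`|y|^-1 *: y) => //=; rewrite normrZ normfV normr_id mulVf ?gt_eqF.
have -> : xi (`|y|^-1 *: y) = `|y|^-1 * xi y.
  by case: (dxi) => lin _; rewrite -[RHS]addr0 -[0 in RHS](dual0 dxi) -lin addr0.
by rewrite normrM normfV normr_id mulrC ler_pdivrMr.
Qed.

Lemma bounded_linear_dual xi M : linear xi -> 0 <= M ->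
  (forall y, `|xi y| <= M * `|y|) -> is_dual xi /\ dnorm xi <= M.
Proof.
move=> lin M0 xiM.
pose g : {linear X -> R} := HB.pack xi (GRing.isLinear.Build _ _ _ _ xi lin).
split.
  split => //; apply: (@bounded_linear_continuous _ _ _ g).
  apply/linear_boundedP; near=> r => x.
  rewrite (le_trans (xiM x)) // ler_wpM2r //; near: r.
apply: ge_sup; first by exists `|xi 0|, 0 => //=; rewrite normr0.
by move=> _ [x x1 <-]; apply: le_trans (xiM x) _; rewrite ler_piMr.
Unshelve. all: by end_near. Qed.

End dual_space.

Section norming_functional.
Context {R : realType} {X : normedModType R}.
Variable v : X.

(* [G] is the graph of a linear functional on a subspace of [X], dominated by
   the norm and taking the value [`|v|] at [v]. *)
Definition norming_graph (G : set (X * R)) :=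
  [/\ G (v, `|v|),
      (forall x a y b, G (x, a) -> G (y, b) -> G (x + y, a + b)),
      (forall t x a, G (x, a) -> G (t *: x, t * a)) &
      (forall x a, G (x, a) -> a <= `|x|)].

Lemma norming_graph0 [G] : norming_graph G -> G (0, 0).
Proof. by case=> Gv _ GZ _; have := GZ 0 _ _ Gv; rewrite scale0r mul0r. Qed.

Lemma norming_graph_fun [G x a b] :
  norming_graph G -> G (x, a) -> G (x, b) -> a = b.
Proof.
case=> _ GD GZ Gle xa xb.
have := Gle _ _ (GD _ _ _ _ xa (GZ (-1) _ _ xb)).
have := Gle _ _ (GD _ _ _ _ xb (GZ (-1) _ _ xa)).
rewrite !scaleN1r subrr normr0 !mulN1r !subr_le0 => ba ab.
by apply/eqP; rewrite eq_le ab ba.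
Qed.

(* Any [c] in this gap extends [G] by [z |-> c] without breaking the norm bound. *)
Lemma norming_graph_gap [G] z : norming_graph G -> exists c,
  forall x a, G (x, a) -> a - `|x - z| <= c /\ c <= `|x + z| - a.
Proof.
move=> gG; have G00 := norming_graph0 gG; case: gG => _ GD _ Gle.
have sep x a y b : G (x, a) -> G (y, b) -> a - `|x - z| <= `|y + z| - b.
  move=> xa yb; rewrite lerBrDr addrAC lerBlDr.
  apply: le_trans (Gle _ _ (GD _ _ _ _ xa yb)) _.
  have -> : x + y = (x - z) + (y + z) by rewrite addrACA addNr addr0.
  by rewrite [leRHS]addrC ler_normD.
pose S := [set r | exists x a, G (x, a) /\ r = a - `|x - z|].
have S0 : S !=set0 by exists (0 - `|0 - z|), 0, 0.
have hub : has_ubound S by exists (`|0 + z| - 0) => _ [x [a [xa ->]]]; exact: sep.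
exists (sup S) => x a xa; split; first by apply: ub_le_sup => //; exists x, a.
by apply: ge_sup => // _ [y [b [yb ->]]]; exact: sep.
Qed.

Lemma norming_graph_extend [G] z : norming_graph G -> ~ (exists a, G (z, a)) ->
  exists B, norming_graph B /\ G `<` B.
Proof.
move=> gG nz; have [c Hc] := norming_graph_gap z gG.
have G00 := norming_graph0 gG; case: gG => Gv GD GZ Gle.
pose B := [set pr | exists x a t, G (x, a) /\ pr = (x + t *: z, a + t * c)].
exists B; split; last first.
  split; first by move=> [x a] xa; exists x, a, 0; rewrite scale0r mul0r !addr0.
  move=> /(_ (z, c)) BG; apply: nz; exists c; apply: BG.
  by exists 0, 0, 1; rewrite scale1r mul1r !add0r.
split.
- by exists v, `|v|, 0; rewrite scale0r mul0r !addr0.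
- move=> _ _ _ _ [x1 [a1 [t1 [xa1 [-> ->]]]]] [x2 [a2 [t2 [xa2 [-> ->]]]]].
  exists (x1 + x2), (a1 + a2), (t1 + t2); split; first exact: GD.
  by rewrite scalerDl mulrDl; congr (_, _); exact: addrACA.
- move=> t _ _ [x [a [s [xa [-> ->]]]]].
  exists (t *: x), (t * a), (t * s); split; first exact: GZ.
  by rewrite scalerDr scalerA mulrDr mulrA.
- move=> _ _ [x [a [t [xa [-> ->]]]]].
  have [t0|t0|->] := ltgtP t 0; last by rewrite scale0r mul0r !addr0; exact: Gle.
  + have nt0 : 0 < - t by rewrite oppr_gt0.
    have e : - t * `|(- t)^-1 *: x - z| = `|x + t *: z|.
      rewrite -[X in X * _](gtr0_norm nt0) -normrZ scalerBr scalerA.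
      by rewrite mulfV ?gt_eqF // scale1r scaleNr opprK.
    have := (Hc _ _ (GZ (- t)^-1 _ _ xa)).1.
    rewrite -(ler_pM2l nt0) mulrBr mulrA mulfV ?gt_eqF // mul1r e mulNr.
    by rewrite lerBlDr -lerBlDl opprK addrC.
  + have e : t * `|t^-1 *: x + z| = `|x + t *: z|.
      rewrite -[X in X * _](gtr0_norm t0) -normrZ scalerDr scalerA.
      by rewrite mulfV ?gt_eqF // scale1r.
    have := (Hc _ _ (GZ t^-1 _ _ xa)).2.
    rewrite -(ler_pM2l t0) mulrBr mulrA mulfV ?gt_eqF // mul1r e.
    by rewrite lerBrDr addrC.
Qed.

Lemma norming_graph_span :
  norming_graph [set pr | exists t : R, pr = (t *: v, t * `|v|)].
Proof.
split.
- by exists 1; rewrite scale1r mul1r.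
- by move=> _ _ _ _ [s [-> ->]] [t [-> ->]]; exists (s + t); rewrite scalerDl mulrDl.
- by move=> t _ _ [s [-> ->]]; exists (t * s); rewrite scalerA mulrA.
- by move=> _ _ [t [-> ->]]; rewrite normrZ ler_wpM2r // ler_norm.
Qed.

(* Zorn's lemma is applied to the family extended by [set0], so that the union
   of the empty chain also belongs to it. *)
Lemma norming_graph_maximal :
  exists A, norming_graph A /\ forall B, A `<` B -> ~ norming_graph B.
Proof.
have gG0 := norming_graph_span; set G0 := [set pr | _] in gG0.
pose P G := G = set0 \/ norming_graph G.
have [A [PA Amax]] : exists A, P A /\ forall B, A `<` B -> ~ P B.
  apply: Zorn_bigcup => F FP Ftot.
  have [[G1 [FG1 gG1]]|nG] := pselect (exists G, F G /\ norming_graph G); last first.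
    left; apply/seteqP; split => // pr [G FG Gpr].
    case: (FP G FG) => [G00|gG]; first by rewrite G00 in Gpr.
    by exfalso; apply: nG; exists G.
  have gF G pr : F G -> G pr -> norming_graph G.
    by move=> FG Gpr; case: (FP G FG) => // G00; rewrite G00 in Gpr.
  right; split.
  - by exists G1 => //; case: gG1.
  - move=> x a y b [G2 FG2 G2x] [G3 FG3 G3y].
    have [G23|G32] := Ftot _ _ FG2 FG3.
    + exists G3 => //; case: (gF _ _ FG3 G3y) => _ GD _ _.
      by apply: GD => //; exact: G23.
    + exists G2 => //; case: (gF _ _ FG2 G2x) => _ GD _ _.
      by apply: GD => //; exact: G32.
  - move=> t x a [G FG Gx]; exists G => //.
    by case: (gF _ _ FG Gx) => _ _ GZ _; apply: GZ.
  - by move=> x a [G FG Gx]; case: (gF _ _ FG Gx) => _ _ _; apply.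
exists A; split => [|B AB gB]; last by apply: (Amax B AB); right.
case: PA => // A0; exfalso; apply: (Amax G0); last by right.
rewrite A0; split => // /(_ (v, `|v|)) h.
by case: gG0 => /h.
Qed.

Lemma norming_functional_exists : exists xi : X -> R,
  [/\ linear xi, (forall y, `|xi y| <= `|y|) & xi v = `|v|].
Proof.
have [A [gA Amax]] := norming_graph_maximal.
have Atot z : exists a, A (z, a).
  apply: contrapT => nz; have [B [gB AB]] := norming_graph_extend z gA nz.
  exact: Amax AB gB.
have [xi Axi] := choice Atot.
case: (gA) => Av AD AZ Ale.
have xiE x a : A (x, a) -> xi x = a by apply: norming_graph_fun gA (Axi x).
exists xi; split.
- by move=> a u w; apply/xiE/AD; [exact: AZ (Axi u) | exact: Axi].
- move=> y; rewrite ler_norml Ale ?andbT //.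
  by have := Ale _ _ (AZ (-1) _ _ (Axi y)); rewrite scaleN1r normrN mulN1r lerNl.
- exact: xiE.
Qed.

End norming_functional.

Lemma norming_dual {R : realType} {X : normedModType R} (v : X) [t : R] :
  0 <= t -> exists xi, [/\ is_dual xi, dnorm xi <= t & xi v = t * `|v|].
Proof.
move=> t0; have [xi [lin xi1 xiv]] := norming_functional_exists v.
have [dual dn] : is_dual (fun y => t * xi y) /\ dnorm (fun y => t * xi y) <= t.
  apply: bounded_linear_dual => //.
    by move=> a u w; rewrite lin mulrDr mulrCA.
  by move=> y; rewrite normrM ger0_norm // ler_wpM2l.
by exists (fun y => t * xi y); split => //=; rewrite xiv.
Qed.

Section real_exponents.
Context {R : realType}.
Implicit Types (p q lam s gam kap r d : R).

Lemma conjugate_exponent [p q] : 0 < p -> 0 < q -> p^-1 + q^-1 = 1 ->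
  (p - 1) * (q / p) = 1.
Proof.
move=> p0 q0 pq; have pqE : q + p = p * q.
  by rewrite -[RHS]mulr1 -pq; field; rewrite !gt_eqF.
by rewrite mulrA mulrBl mul1r -pqE [q + p]addrC addrK divff // gt_eqF.
Qed.

Lemma le_powR_inv [gam r d s lam] : 0 < gam -> 0 <= r -> 0 < s -> s * lam = 1 ->
  gam * r `^ s <= d -> r <= gam^-1 `^ lam * d `^ lam.
Proof.
move=> g0 r0 s0 slam hd.
have lam0 : 0 < lam by rewrite -(pmulr_rgt0 _ s0) slam.
have gr0 : 0 <= gam * r `^ s by rewrite mulr_ge0 ?powR_ge0 ?(ltW g0).
have gi0 : 0 <= gam^-1 by rewrite invr_ge0 ltW.
have d0 : 0 <= d := le_trans gr0 hd.
rewrite -powRM //.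
have {1}-> : r = (gam^-1 * (gam * r `^ s)) `^ lam.
  by rewrite mulKf ?gt_eqF // -powRrM slam powRr1.
apply: ge0_ler_powR; rewrite ?nnegrE ?mulr_ge0 ?ler_wpM2l ?powR_ge0 //.
- exact: ltW.
- exact: ltW.
Qed.

(* With [t = (r / 2 kap)^(p-1)], a tilt of slope [d <= t] in the direction of
   [r] gains [t r] and loses at most [kap t^(1+lam) = t r / 2]. *)
Lemma tilt_gain [kap r d p lam] : 0 < kap -> 0 <= r -> 1 < p -> (p - 1) * lam = 1 ->
  0 <= d -> d <= (r / (2 * kap)) `^ (p - 1) ->
  (2 * kap)^-1 `^ (p - 1) / 2 * r `^ p <=
    (r / (2 * kap)) `^ (p - 1) * r - kap * (d * d `^ lam).
Proof.
move=> k0 r0 p1 plam d0 dt; set c := (2 * kap)^-1; set t := (r / (2 * kap)) `^ (p - 1).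
have c0 : 0 < c by rewrite invr_gt0 mulr_gt0.
have p0 : 0 < p by apply: lt_trans p1.
have p10 : 0 < p - 1 by rewrite subr_gt0.
have lam0 : 0 <= lam by rewrite ltW // -(pmulr_rgt0 _ p10) plam.
have loss : kap * (d * d `^ lam) <= t * r / 2.
  have tlam : t `^ lam = r * c.
    by rewrite /t -powRrM plam powRr1 // mulr_ge0 // ltW.
  have dd : d * d `^ lam <= t * (r * c).
    rewrite -tlam; apply: ler_pM => //; first exact: powR_ge0.
    by apply: ge0_ler_powR; rewrite ?nnegrE ?powR_ge0.
  have -> : t * r / 2 = kap * (t * (r * c)) by rewrite /c invfM; field; rewrite gt_eqF.
  by rewrite ler_pM2l.
have gain : c `^ (p - 1) / 2 * r `^ p = t * r / 2.
  have -> : t = r `^ (p - 1) * c `^ (p - 1) by rewrite /t powRM // ltW.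
  by rewrite -(mulr_powRB1 r0 p0); ring.
by rewrite gain; lra.
Qed.

End real_exponents.

Section subdifferential.
Context {R : realType} {X : normedModType R}.
Implicit Types (f : X -> \bar R) (xi : X -> R) (x y : X).

Lemma subdiff_le [f x xi] y : subdiff f x xi -> (f x + (xi (y - x))%:E <= f y)%E.
Proof.
case=> dxi /(_ y); rewrite dual_sub //.
case: (f x) => [fx| |]; case: (f y) => [fy| |] //=.
- by rewrite -!EFinB -EFinD !lee_fin => h; lra.
all: by move=> _; rewrite ?leey ?leNye.
Qed.

Lemma subdiff_fin [f x xi] : proper_fun f -> subdiff f x xi -> f x \is a fin_num.
Proof.
case=> fNy [y fy] sxi; rewrite fin_numE fNy /=; apply: contra_neq fy => fxy.
by have := subdiff_le y sxi; rewrite fxy /= leye_eq => /eqP.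
Qed.

Lemma dist0_le [F : X -> set (X -> R)] [x xi] :
  F x xi -> (dist0 F x <= (dnorm xi)%:E)%E.
Proof. by move=> Fxi; apply: ereal_inf_lbound; exists xi. Qed.

Lemma le_dist0 [F : X -> set (X -> R)] [x] [a : R] :
  (forall xi, F x xi -> a <= dnorm xi) -> (a%:E <= dist0 F x)%E.
Proof. by move=> Fa; apply: le_ereal_inf_tmp => _ [xi Fxi <-]; rewrite lee_fin Fa. Qed.

Lemma dist0_subdiff_ge0 f x : (0 <= dist0 (subdiff f) x)%E.
Proof. by apply: le_dist0 => xi [dxi _]; exact: dnorm_ge0. Qed.

Lemma growth_subdiff_dnorm [f xbar x xi p gam] :
  f xbar \is a fin_num -> 1 < p ->
  (f xbar + (gam * `|x - xbar| `^ p)%:E <= f x)%E -> subdiff f x xi ->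
  gam * `|x - xbar| `^ (p - 1) <= dnorm xi.
Proof.
move=> fin p1 grow sxi; set r := `|x - xbar|.
have slope : gam * r `^ p <= dnorm xi * r.
  have := le_trans (leeD2r (xi (xbar - x))%:E grow) (subdiff_le xbar sxi).
  rewrite -addeA -EFinD -[leRHS]adde0 leeD2lE // lee_fin.
  rewrite !(dual_sub _ _ sxi.1) -/r => h.
  apply: le_trans (le_trans (ler_norm _) (dual_le_dnorm (x - xbar) sxi.1)).
  rewrite (dual_sub _ _ sxi.1); lra.
have [r0|r_neq0] := eqVneq r 0.
  by rewrite r0 powR0 ?mulr0 ?(dnorm_ge0 sxi.1) // subr_eq0 gt_eqF.
have r_pos : 0 < r by rewrite lt_neqAle eq_sym r_neq0 normr_ge0.
rewrite -(ler_pM2r r_pos) -mulrA [_ * r]mulrC mulr_powRB1 ?normr_ge0 //.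
exact: lt_trans p1.
Qed.

Lemma growth_subregular [f xbar p lam delta gam] :
  f xbar \is a fin_num -> subdiff f xbar (fun _ => 0) ->
  1 < p -> (p - 1) * lam = 1 -> (0 < delta)%E -> 0 < gam ->
  (forall x, eball xbar delta x ->
     (f xbar + (gam * `|x - xbar| `^ p)%:E <= f x)%E) ->
  strongly_subregular (subdiff f) lam xbar delta (gam^-1 `^ lam).
Proof.
move=> fin s0 p1 plam d0 g0 grow.
have p10 : 0 < p - 1 by rewrite subr_gt0.
have lam0 : 0 < lam by rewrite -(pmulr_rgt0 _ p10) plam.
do 3 split => //; first by rewrite powR_gt0 // invr_gt0.
move=> x /grow gx; have := le_dist0 (fun xi => growth_subdiff_dnorm fin p1 gx).
case: (dist0 (subdiff f) x) => [d| |] // gd.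
  rewrite poweR_EFin -EFinM lee_fin.
  by apply: (le_powR_inv g0 (normr_ge0 (x - xbar)) p10 plam); rewrite -lee_fin.
by rewrite poweRyr ?gt_eqF // gt0_muley ?lte_fin ?powR_gt0 ?invr_gt0 // leey.
Qed.

Lemma subregular_dnorm [f xbar lam alpha kap xs xi] :
  0 <= lam -> strongly_subregular (subdiff f) lam xbar alpha kap ->
  eball xbar alpha xs -> subdiff f xs xi ->
  `|xs - xbar| <= kap * dnorm xi `^ lam.
Proof.
move=> lam0 [_ [_ [k0 sreg]]] xsB sxi.
have := sreg _ xsB; have := dist0_le sxi; have := dist0_subdiff_ge0 f xs.
case: (dist0 (subdiff f) xs) => [d| |] //; rewrite ?lee_fin => d0 dle.
move=> /le_trans; apply.
by rewrite ler_pM2l // ge0_ler_powR ?nnegrE ?(dnorm_ge0 sxi.1).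
Qed.

Lemma subregular_tilt_minorant [f xbar lam alpha kap] :
  0 <= lam -> subdiff f xbar (fun _ => 0) -> lhc_at0 (subdiff_inv f) ->
  strongly_subregular (subdiff f) lam xbar alpha kap ->
  exists2 eps : R, 0 < eps & forall xi, is_dual xi -> dnorm xi < eps ->
    forall y, (f xbar + (xi (y - xbar) - kap * (dnorm xi * dnorm xi `^ lam))%:E
               <= f y)%E.
Proof.
move=> lam0 s0 lhc sreg; have [_ [a0 _]] := sreg.
have [rho rho0 rho_a] : exists2 rho : R, 0 < rho & (rho%:E <= alpha)%E.
  by case: alpha a0 {sreg} => [a| |] // a0; [exists a | exists 1; rewrite ?leey].
have [|eps eps0 near0] := lhc (ball xbar rho) (ball_open xbar rho).
  by exists xbar; split => //; exact: ballxx.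
exists eps => // xi dxi xi_eps y.
have [xs [sxs xs_rho]] := near0 xi dxi xi_eps.
have xs_alpha : eball xbar alpha xs.
  apply: le_trans rho_a; rewrite lee_fin distrC ltW //.
  by move: xs_rho; rewrite -ball_normE.
have xi_xs : xi (xs - xbar) <= kap * (dnorm xi * dnorm xi `^ lam).
  apply: le_trans (le_trans (ler_norm _) (dual_le_dnorm _ dxi)) _.
  rewrite mulrCA ler_wpM2l ?(dnorm_ge0 dxi) //.
  exact: subregular_dnorm lam0 sreg xs_alpha sxs.
have fxs : (f xbar <= f xs)%E by have := subdiff_le xs s0; rewrite adde0.
apply: le_trans (subdiff_le y sxs); apply: le_trans (leeD2r _ fxs).
rewrite leeD2l // lee_fin; move: xi_xs; rewrite !dual_sub //; lra.
Qed.

Lemma subregular_growth [f xbar p lam alpha kap] :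
  subdiff f xbar (fun _ => 0) -> lhc_at0 (subdiff_inv f) ->
  1 < p -> (p - 1) * lam = 1 ->
  strongly_subregular (subdiff f) lam xbar alpha kap ->
  exists (delta : \bar R) (gam : R), (0 < delta)%E /\ 0 < gam /\
    forall x, eball xbar delta x ->
      (f xbar + (gam * `|x - xbar| `^ p)%:E <= f x)%E.
Proof.
move=> s0 lhc p1 plam sreg; have [_ [_ [k0 _]]] := sreg.
have p10 : 0 < p - 1 by rewrite subr_gt0.
have lam0 : 0 < lam by rewrite -(pmulr_rgt0 _ p10) plam.
have [eps eps0 minorant] := subregular_tilt_minorant (ltW lam0) s0 lhc sreg.
set rad := (eps / 2) `^ lam.
have rad0 : 0 < rad by rewrite powR_gt0 // divr_gt0.
exists (2 * kap * rad)%:E, ((2 * kap)^-1 `^ (p - 1) / 2); split.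
  by rewrite lte_fin !mulr_gt0.
split; first by rewrite divr_gt0 // powR_gt0 // invr_gt0 mulr_gt0.
move=> y; rewrite /eball /= lee_fin => y_near; set r := `|y - xbar|.
set t := (r / (2 * kap)) `^ (p - 1).
(* the radius is chosen so that the slope [t] stays below [eps / 2] *)
have t_lt : t < eps.
  have : t <= rad `^ (p - 1).
    apply: ge0_ler_powR; rewrite ?nnegrE ?divr_ge0 ?(ltW p10) ?(ltW rad0) //.
    - exact: normr_ge0.
    - by rewrite mulr_ge0 ?(ltW k0).
    - by rewrite ler_pdivrMr ?mulr_gt0 // mulrC.
  rewrite /rad -powRrM [lam * _]mulrC plam powRr1 ?divr_ge0 ?(ltW eps0) //.
  by move=> /le_lt_trans; apply; rewrite ltr_pdivrMr // ltr_pMr // ltr1n.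
have [xi [dxi xi_t xiv]] :=
  norming_dual (y - xbar) (powR_ge0 (r / (2 * kap)) (p - 1)).
apply: le_trans (minorant xi dxi (le_lt_trans xi_t t_lt) y).
rewrite leeD2l // lee_fin xiv.
exact: tilt_gain k0 (normr_ge0 _) p1 plam (dnorm_ge0 dxi) xi_t.
Qed.

End subdifferential.

Theorem corollary4p2 (R : realType) (X : normedModType R)
  (f : X -> \bar R) (xbar : X) (p q : R) :
  proper_fun f ->
  subdiff_inv f (fun _ => 0) xbar ->
  1 < p -> 1 < q -> p^-1 + q^-1 = 1 ->
  lhc_at0 (subdiff_inv f) ->
  ((exists (delta : \bar R) (gamma : R),
      (0 < delta)%E /\ 0 < gamma /\
      forall x, eball xbar delta x ->
        (f x >= f xbar + (gamma * powR (`|x - xbar|) p)%:E)%E)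
   <->
   (exists (alpha : \bar R) (kappa : R),
      strongly_subregular (subdiff f) (q / p) xbar alpha kappa)).
Proof.
move=> fprop s0 p1 q1 pq lhc.
have plam := conjugate_exponent (lt_trans ltr01 p1) (lt_trans ltr01 q1) pq.
split=> [[delta [gam [d0 [g0 grow]]]] | [alpha [kap sreg]]].
  exists delta, (gam^-1 `^ (q / p)).
  exact: growth_subregular (subdiff_fin fprop s0) s0 p1 plam d0 g0 grow.
exact: subregular_growth s0 lhc p1 plam sreg.
Qed.
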